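(* Let $p:X\to Y$ be a continuous map with overlay structure $\mathcal S$, and assume $X$ is connected. Let $G$ be the group of deck transformations of $p$ preserving $\mathcal S$. Then the action of $G$ on $X$ is an overlay action with overlay structure $\mathcal S$. Moreover, $p=q\circ\pi$, where $\pi:X\to X/G$ is the projection onto the orbit space (quotient topology) and $q:X/G\to Y$ is an overlay with overlay structure $\{\pi(U):U\in\mathcal S\}$.
   Context: A deck transformation of $p$ is a homeomorphism $h:X\to X$ with $p\circ h=p$; it preserves $\mathcal S$ if $h(U)\in\mathcal S$ for every $U\in\mathcal S$. For a continuous map $p:X\to Y$: a slice of $p$ is an open set $U\subseteq X$ such that $p^{-1}(p(U))$ is the disjoint union of a family of open sets $U_s$ ($s\in S$), each mapped by $p$ homeomorphically onto $p(U)$, with $U=U_t$ for some $t\in S$. A covering structure of $p$ is an open cover $\mathcal S$ of $X$ by slices of $p$ such that for every $U\in\mathcal S$, $p^{-1}(p(U))$ is the disjoint union of a family $\{U_j\}_{j\in J}$ of elements of $\mathcal S$, each mapped homeomorphically onto $p(U)$. For $x\in X$, $st(x,\mathcal S)=\bigcup\{U\in\mathcal S: x\in U\}$. An overlay structure of $p$ is a covering structure $\mathcal S$ such that $st(x,\mathcal S)$ is a slice of $p$ for every $x\in X$; $p$ is an overlay if it has one. For a free action of a group $G$ on $X$: a slice of the action is an open $U\subseteq X$ with $U\cap(g\cdot U)\neq\emptyset\Rightarrow g=1_G$. The action is an overlay action with overlay structure $\mathcal U$ if $\mathcal U$ is a covering structure of the projection $X\to X/G$ such that $st(x,\mathcal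 U)$ is a slice of the action for every $x\in X$. *)

From Stdlib Require Import Classical FunctionalExtensionality PropExtensionality.

Set Implicit Arguments.

Record topology (X : Type) := Topology {
  open : (X -> Prop) -> Prop;
  open_setT : open (fun _ => True);
  open_setI : forall U V, open U -> open V -> open (fun x => U x /\ V x);
  open_bigU : forall F : (X -> Prop) -> Prop,
      (forall U, F U -> open U) -> open (fun x => exists U, F U /\ U x)
}.
Arguments open {X} t U.

Definition continuous {X Y : Type} (tX : topology X) (tY : topology Y)
  (f : X -> Y) : Prop :=
  forall V, open tY V -> open tX (fun x => V (f x)).

Definition connected {X : Type} (tX : topology X) : Prop :=
  ~ exists U V : X -> Prop,
      open tX U /\ open tX V /\ (exists x, U x) /\ (exists x, V x) /\
      (forall x, U x \/ V x) /\ (forall x, ~ (U x /\ V x)).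

Definition image {X Y : Type} (f : X -> Y) (U : X -> Prop) : Y -> Prop :=
  fun y => exists x, U x /\ f x = y.

(* f maps the subspace A of X homeomorphically onto the subspace B of Y
   (subspace topologies written out). *)
Definition homeo_onto {X Y : Type} (tX : topology X) (tY : topology Y)
  (f : X -> Y) (A : X -> Prop) (B : Y -> Prop) : Prop :=
  (forall x, A x -> B (f x)) /\
  (forall x1 x2, A x1 -> A x2 -> f x1 = f x2 -> x1 = x2) /\
  (forall y, B y -> exists x, A x /\ f x = y) /\
  (* continuity of f|A : A -> B *)
  (forall V, open tY V -> exists W, open tX W /\ forall x, A x -> (W x <-> V (f x))) /\
  (* continuity of the inverse B -> A *)
  (forall W, open tX W -> exists V, open tY V /\ forall x, A x -> (W x <-> V (f x))).

Definition sheet_decomp {X Y : Type} (tX : topology X) (tY : topology Y)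
  (p : X -> Y) (U : X -> Prop) {I : Type} (F : I -> X -> Prop) : Prop :=
  (forall i, open tX (F i)) /\
  (forall i j x, F i x -> F j x -> i = j) /\
  (forall x, image p U (p x) <-> exists i, F i x) /\
  (forall i, homeo_onto tX tY p (F i) (image p U)).

Definition slice {X Y : Type} (tX : topology X) (tY : topology Y)
  (p : X -> Y) (U : X -> Prop) : Prop :=
  open tX U /\
  exists (I : Type) (F : I -> X -> Prop),
    sheet_decomp tX tY p U F /\ exists t, forall x, F t x <-> U x.

Definition covering_structure {X Y : Type} (tX : topology X) (tY : topology Y)
  (p : X -> Y) (S : (X -> Prop) -> Prop) : Prop :=
  (forall U, S U -> open tX U) /\
  (forall x, exists U, S U /\ U x) /\
  (forall U, S U -> slice tX tY p U) /\
  (forall U, S U -> exists (J : Type) (F : J -> X -> Prop),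
        (forall j, S (F j)) /\ sheet_decomp tX tY p U F).

Definition star {X : Type} (S : (X -> Prop) -> Prop) (x : X) : X -> Prop :=
  fun y => exists U, S U /\ U x /\ U y.

Definition overlay_structure {X Y : Type} (tX : topology X) (tY : topology Y)
  (p : X -> Y) (S : (X -> Prop) -> Prop) : Prop :=
  covering_structure tX tY p S /\ forall x, slice tX tY p (star S x).

Definition overlay {X Y : Type} (tX : topology X) (tY : topology Y)
  (p : X -> Y) : Prop :=
  continuous tX tY p /\ exists S, overlay_structure tX tY p S.

Definition homeomorphism {X : Type} (tX : topology X) (h : X -> X) : Prop :=
  continuous tX tX h /\
  exists k : X -> X, continuous tX tX k /\
    (forall x, k (h x) = x) /\ (forall x, h (k x) = x).

Definition deck_transformation {X Y : Type} (tX : topology X)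
  (p : X -> Y) (h : X -> X) : Prop :=
  homeomorphism tX h /\ forall x, p (h x) = p x.

Definition deck_preserving {X Y : Type} (tX : topology X)
  (p : X -> Y) (S : (X -> Prop) -> Prop) : (X -> X) -> Prop :=
  fun h => deck_transformation tX p h /\ forall U, S U -> S (image h U).

Definition orbit {X : Type} (G : (X -> X) -> Prop) (x : X) : X -> Prop :=
  fun y => exists g, G g /\ g x = y.

Definition orbit_space {X : Type} (G : (X -> X) -> Prop) : Type :=
  { O : X -> Prop | exists x, O = orbit G x }.

Definition orbit_proj {X : Type} (G : (X -> X) -> Prop) (x : X) : orbit_space G :=
  exist _ (orbit G x) (ex_intro _ x eq_refl).

Section QuotTop.
Variables (X Q : Type) (tX : topology X) (f : X -> Q).

Definition quot_open (V : Q -> Prop) : Prop := open tX (fun x => V (f x)).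

Lemma quot_open_setT : quot_open (fun _ => True).
Proof. exact (open_setT tX). Qed.

Lemma quot_open_setI U V : quot_open U -> quot_open V ->
  quot_open (fun x => U x /\ V x).
Proof. intros; apply (open_setI tX); assumption. Qed.

Lemma quot_open_bigU (F : (Q -> Prop) -> Prop) :
  (forall U, F U -> quot_open U) -> quot_open (fun x => exists U, F U /\ U x).
Proof.
  intro H. unfold quot_open.
  set (F' := fun W : X -> Prop => exists U, F U /\ W = (fun x => U (f x))).
  assert (E : (fun x => exists U, F U /\ U (f x)) =
              (fun x => exists W, F' W /\ W x)).
  { apply functional_extensionality; intro x; apply propositional_extensionality.
    split.
    - intros [U [HU Hx]]. exists (fun x => U (f x)). split; [exists U; auto | exact Hx].
    - intros [W [[U [HU ->]] Hx]]. exists U; auto. }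
  rewrite E. apply (open_bigU tX). intros W [U [HU ->]]. apply H; exact HU.
Qed.

Definition quotient_topology : topology Q :=
  @Topology Q quot_open quot_open_setT quot_open_setI quot_open_bigU.
End QuotTop.

Definition orbit_topology {X : Type} (tX : topology X) (G : (X -> X) -> Prop)
  : topology (orbit_space G) := quotient_topology tX (orbit_proj G).

Definition free_action {X : Type} (G : (X -> X) -> Prop) : Prop :=
  forall g x, G g -> g x = x -> g = (fun y => y).

Definition action_slice {X : Type} (tX : topology X) (G : (X -> X) -> Prop)
  (U : X -> Prop) : Prop :=
  open tX U /\
  forall g, G g -> (exists y, U y /\ image g U y) -> g = (fun y => y).

Definition overlay_action {X : Type} (tX : topology X) (G : (X -> X) -> Prop)
  (U : (X -> Prop) -> Prop) : Prop :=
  free_action G /\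
  covering_structure tX (orbit_topology tX G) (orbit_proj G) U /\
  forall x, action_slice tX G (star U x).

Definition image_family {X Y : Type} (f : X -> Y) (S : (X -> Prop) -> Prop)
  : (Y -> Prop) -> Prop :=
  fun W => exists U, S U /\ W = image f U.

From Stdlib Require Import Classical FunctionalExtensionality PropExtensionality ProofIrrelevance ClassicalEpsilon.
Set Implicit Arguments.

(* The proof runs as follows.
   - Uniqueness of lifts: on a connected X covered by slices, a continuous map
     over p with a fixed point is the identity (its fixed and moved sets are open).
   - G is a group of homeomorphisms; the only non-obvious point is that inverses
     preserve S, which follows because two members of S with a common point and
     the same p-image coincide (p is injective on stars).
   - For any group of homeomorphisms, pi is open and is a homeomorphism on every
     open set on which it is injective.
   - Overlay action: by uniqueness of lifts G acts freely and the translates g(U),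
     U in S, are disjoint sheets over pi(U); stars are slices of the action.
   - Factorization: q(pi x) = p x is well defined and continuous; every G-invariant
     family of disjoint sheets over p(A) descends along pi to sheets of q over
     pi(A).  Applying this to the members of S over p(U) and to the stars over a
     fibre shows that pi(S) is an overlay structure of q. *)

Lemma set_ext {A : Type} (P Q : A -> Prop) : (forall x, P x <-> Q x) -> P = Q.
Proof.
  intro H; apply functional_extensionality; intro x.
  apply propositional_extensionality; apply H.
Qed.

Lemma sig_ext {A : Type} (P : A -> Prop) (s1 s2 : {x | P x}) :
  proj1_sig s1 = proj1_sig s2 -> s1 = s2.
Proof.
  destruct s1 as [a pa], s2 as [b pb]; simpl; intros ->.
  f_equal; apply proof_irrelevance.
Qed.

Lemma image_id {X : Type} (A : X -> Prop) : image (fun y => y) A = A.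
Proof.
  apply set_ext; intro z; split; [intros [a [Aa <-]]; auto | intro; exists z; auto].
Qed.

Lemma image_comp {X : Type} (g h : X -> X) (A : X -> Prop) :
  image (fun x => g (h x)) A = image g (image h A).
Proof.
  apply set_ext; intro z; split.
  - intros [a [Aa <-]]; exists (h a); split; auto; exists a; auto.
  - intros [b [[a [Aa <-]] <-]]; exists a; auto.
Qed.

Lemma image_bij {X : Type} (h k : X -> X) (A : X -> Prop) :
  (forall x, k (h x) = x) -> (forall x, h (k x) = x) ->
  image h A = fun z => A (k z).
Proof.
  intros hk kh; apply set_ext; intro z; split.
  - intros [a [Aa <-]]; rewrite hk; auto.
  - intro Az; exists (k z); auto.
Qed.

Lemma homeomorphism_open {X : Type} (tX : topology X) (h : X -> X) (A : X -> Prop) :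
  homeomorphism tX h -> open tX A -> open tX (image h A).
Proof.
  intros [_ [k [Hk [hk kh]]]] HA. rewrite (image_bij h k A hk kh). apply Hk; exact HA.
Qed.

Lemma open_local {X : Type} (tX : topology X) (A : X -> Prop) :
  (forall x, A x -> exists N, open tX N /\ N x /\ forall z, N z -> A z) -> open tX A.
Proof.
  intro H.
  assert (E : A = fun x => exists N, (open tX N /\ forall z, N z -> A z) /\ N x).
  { apply set_ext; intro x; split.
    - intro Ax; destruct (H x Ax) as [N [HN [Nx HNA]]]; exists N; auto.
    - intros [N [[_ HNA] Nx]]; auto. }
  rewrite E. apply open_bigU. intros N [HN _]; exact HN.
Qed.

Lemma homeo_onto_image {X Y : Type} (tX : topology X) (tY : topology Y) f A B :
  homeo_onto tX tY f A B -> forall y, image f A y <-> B y.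
Proof.
  intros [Hm [_ [Hs _]]] y; split.
  - intros [x [Ax <-]]; auto.
  - intros By; destruct (Hs y By) as [x [Ax E]]; exists x; auto.
Qed.

Lemma sheet_image {X Y : Type} (tX : topology X) (tY : topology Y) p U I
  (F : I -> X -> Prop) :
  sheet_decomp tX tY p U F -> forall i y, image p (F i) y <-> image p U y.
Proof. intros [_ [_ [_ Fh]]] i; exact (homeo_onto_image (Fh i)). Qed.

Lemma slice_homeo {X Y : Type} (tX : topology X) (tY : topology Y) p U :
  slice tX tY p U -> homeo_onto tX tY p U (image p U).
Proof.
  intros [_ [I [F [[_ [_ [_ Fh]]] [t Ht]]]]].
  pose proof (Fh t) as H. rewrite (set_ext _ _ Ht) in H. exact H.
Qed.

Lemma slice_inj {X Y : Type} (tX : topology X) (tY : topology Y) p U :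
  slice tX tY p U -> forall a b, U a -> U b -> p a = p b -> a = b.
Proof. intros H; apply (slice_homeo H). Qed.

Lemma image_over_p {X Y : Type} (p : X -> Y) (g : X -> X) (A : X -> Prop) :
  (forall x, p (g x) = p x) -> image p (image g A) = image p A.
Proof.
  intro Hg; apply set_ext; intro y; split.
  - intros [b [[a [Aa <-]] <-]]. exists a; split; auto.
  - intros [a [Aa <-]]. exists (g a); split; [exists a; auto | apply Hg].
Qed.

Lemma covering_slices {X Y : Type} (tX : topology X) (tY : topology Y) p S :
  covering_structure tX tY p S -> forall U, S U -> slice tX tY p U.
Proof. intros [_ [_ [Ss _]]]; exact Ss. Qed.

Lemma covering_slices_cover {X Y : Type} (tX : topology X) (tY : topology Y) p S :
  covering_structure tX tY p S -> forall x, exists U, slice tX tY p U /\ U x.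
Proof.
  intros HS x. destruct (proj1 (proj2 HS) x) as [U [SU Ux]].
  exists U; split; [exact (covering_slices HS U SU) | exact Ux].
Qed.

(* The fixed
   set and the set of moved points are both open, by the local injectivity of p. *)
Section Rigidity.
Variables (X Y : Type) (tX : topology X) (tY : topology Y) (p : X -> Y).
Hypothesis slices_cover : forall x, exists U, slice tX tY p U /\ U x.
Variable f : X -> X.
Hypothesis f_cont : continuous tX tX f.
Hypothesis f_over : forall x, p (f x) = p x.

Lemma fixed_set_open : open tX (fun y => f y = y).
Proof.
  apply open_local; intros y Hy.
  destruct (slices_cover y) as [U [SlU Uy]].
  pose proof (proj1 SlU) as OU.
  exists (fun z => U z /\ U (f z)); split; [|split].
  - apply open_setI; [exact OU | apply f_cont; exact OU].
  - rewrite Hy; auto.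
  - intros z [Uz Ufz]. apply (slice_inj SlU); auto.
Qed.

Lemma moved_set_open : open tX (fun y => f y <> y).
Proof.
  apply open_local; intros y Hy.
  destruct (slices_cover y) as [U [SlU Uy]].
  pose proof SlU as [_ [I [F [[Fo [Fd [Fc _]]] [t Ht]]]]].
  destruct (proj1 (Fc (f y)) (ex_intro _ y (conj Uy (eq_sym (f_over y))))) as [i Fify].
  exists (fun z => F t z /\ F i (f z)); split; [|split].
  - apply open_setI; [apply Fo | apply f_cont; apply Fo].
  - split; [apply Ht; exact Uy | exact Fify].
  - intros z [Ftz Fifz] E. rewrite E in Fifz.
    assert (i = t) by (apply (Fd i t z); auto). subst i.
    apply Hy, (slice_inj SlU); auto; apply Ht; auto.
Qed.

Hypothesis X_connected : connected tX.

Lemma lift_rigid x0 : f x0 = x0 -> f = fun y => y.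
Proof.
  intro Hx0. apply functional_extensionality; intro y.
  apply NNPP; intro Hy. apply X_connected.
  exists (fun y => f y = y), (fun y => f y <> y).
  repeat split; [exact fixed_set_open | exact moved_set_open | exists x0; exact Hx0
                | exists y; exact Hy | intro z; apply classic | tauto].
Qed.
End Rigidity.

Definition homeo_group {X : Type} (tX : topology X) (G : (X -> X) -> Prop) : Prop :=
  G (fun x => x) /\
  (forall g h, G g -> G h -> G (fun x => g (h x))) /\
  (forall h, G h -> exists k, G k /\ (forall x, k (h x) = x) /\ (forall x, h (k x) = x)) /\
  (forall g, G g -> homeomorphism tX g).

Section OrbitSpace.
Variables (X : Type) (tX : topology X) (G : (X -> X) -> Prop).
Hypothesis HG : homeo_group tX G.
Local Notation pi := (orbit_proj G).
Local Notation tQ := (orbit_topology tX G).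

Lemma orbit_proj_surj (xi : orbit_space G) : exists x, xi = pi x.
Proof. destruct xi as [O [x Ox]]. exists x. apply sig_ext. exact Ox. Qed.

Lemma orbit_proj_eq a b : pi a = pi b <-> exists h, G h /\ h a = b.
Proof.
  destruct HG as [Gid [Gcomp [Ginv _]]]. split.
  - intro E. apply (f_equal (@proj1_sig _ _)) in E. simpl in E.
    assert (Hb : orbit G b b) by (exists (fun y => y); auto).
    rewrite <- E in Hb. exact Hb.
  - intros [h [Gh <-]]. apply sig_ext; simpl.
    destruct (Ginv h Gh) as [k [Gk [hk _]]].
    apply set_ext; intro y; split.
    + intros [g [Gg <-]]. exists (fun x => g (k x)); split; [apply Gcomp; auto|].
      rewrite hk; auto.
    + intros [g [Gg <-]]. exists (fun x => g (h x)); split; [apply Gcomp; auto | auto].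
Qed.

Lemma orbit_proj_invariant h x : G h -> pi (h x) = pi x.
Proof. intro Gh. symmetry. apply orbit_proj_eq. exists h; auto. Qed.

Lemma image_orbit_proj_invariant h V : G h -> image pi (image h V) = image pi V.
Proof.
  intro Gh. apply set_ext; intro xi; split.
  - intros [b [[a [Va <-]] <-]]. exists a; split; [auto | symmetry; apply orbit_proj_invariant; auto].
  - intros [a [Va <-]]. exists (h a); split; [exists a; auto | apply orbit_proj_invariant; auto].
Qed.

(* pi^{-1}(pi(A)) is the union of the translates h(A), each of them open. *)
Lemma orbit_proj_open A : open tX A -> open tQ (image pi A).
Proof.
  intro HA. destruct HG as [_ [_ [_ Ghomeo]]].
  change (open tX (fun x => image pi A (pi x))).
  apply open_local. intros x [a [Aa E]].
  apply orbit_proj_eq in E. destruct E as [h [Gh <-]].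
  exists (image h A); split; [|split].
  - apply homeomorphism_open; auto.
  - exists a; auto.
  - intros z [a' [Aa' <-]]. exists a'; split; auto. symmetry; apply orbit_proj_invariant; auto.
Qed.

Lemma orbit_proj_homeo_on A :
  open tX A -> (forall a b, A a -> A b -> pi a = pi b -> a = b) ->
  homeo_onto tX tQ pi A (image pi A).
Proof.
  intros HA Hinj. split; [|split; [exact Hinj|split; [|split]]].
  - intros x Ax; exists x; auto.
  - intros xi [x [Ax <-]]; exists x; auto.
  - intros V HV. exists (fun x => V (pi x)); split; [exact HV | tauto].
  - intros W HW. exists (image pi (fun x => W x /\ A x)); split.
    + apply orbit_proj_open, open_setI; auto.
    + intros x Ax; split.
      * intro Wx; exists x; auto.
      * intros [y [[Wy Ay] E]]. rewrite (Hinj y x Ay Ax E) in Wy. exact Wy.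
Qed.
End OrbitSpace.

(* In an overlay structure, two members of S with a common point and the same
   p-image coincide, because p is injective on the star of that point. *)
Lemma same_sheet {X Y : Type} (tX : topology X) (tY : topology Y) p S :
  overlay_structure tX tY p S -> forall A B z, S A -> S B -> A z -> B z ->
  (forall y, image p A y <-> image p B y) -> A = B.
Proof.
  intros [_ Hst] A B z SA SB Az Bz Hi.
  pose proof (slice_inj (Hst z)) as Inj.
  apply set_ext; intro x; split; intro Hx.
  - destruct (proj1 (Hi (p x)) (ex_intro _ x (conj Hx eq_refl))) as [b [Bb Eb]].
    replace x with b; [exact Bb|].
    apply Inj; [exists B; auto | exists A; auto | auto].
  - destruct (proj2 (Hi (p x)) (ex_intro _ x (conj Hx eq_refl))) as [a [Aa Ea]].
    replace x with a; [exact Aa|].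
    apply Inj; [exists A; auto | exists B; auto | auto].
Qed.

Section DeckGroup.
Variables (X Y : Type) (tX : topology X) (tY : topology Y) (p : X -> Y).
Variable S : (X -> Prop) -> Prop.
Local Notation G := (deck_preserving tX p S).

Lemma deck_over_p g : G g -> forall x, p (g x) = p x.
Proof. intros [[_ P] _]; exact P. Qed.

Lemma deck_preserves_S g : G g -> forall U, S U -> S (image g U).
Proof. intros [_ H]; exact H. Qed.

Lemma deck_id : G (fun y => y).
Proof.
  split; [split|].
  - split; [intros V HV; exact HV|].
    exists (fun y => y); repeat split; auto; intros V HV; exact HV.
  - auto.
  - intros U SU; rewrite image_id; exact SU.
Qed.

Lemma deck_comp g h : G g -> G h -> G (fun x => g (h x)).
Proof.
  intros [[[Cg [kg [Ckg [g1 g2]]]] Pg] Sg] [[[Ch [kh [Ckh [h1 h2]]]] Ph] Sh].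
  split; [split|].
  - split.
    + intros V HV. apply (Ch (fun x => V (g x))), Cg; exact HV.
    + exists (fun x => kh (kg x)); repeat split.
      * intros V HV. apply (Ckg (fun x => V (kh x))), Ckh; exact HV.
      * intro x; rewrite g1, h1; auto.
      * intro x; rewrite h2, g2; auto.
  - intro x; rewrite Pg, Ph; auto.
  - intros U SU; rewrite image_comp; auto.
Qed.

Hypothesis HS : overlay_structure tX tY p S.

(* The inverse k of h preserves S: a nonempty V in S is h(F) for the sheet F
   over p(V) through k(v), so k(V) = F is in S. *)
Lemma deck_inv h : G h ->
  exists k, G k /\ (forall x, k (h x) = x) /\ (forall x, h (k x) = x).
Proof.
  intros [[[Ch [k [Ck [hk kh]]]] Ph] Sh].
  assert (Pk : forall x, p (k x) = p x) by (intro x; rewrite <- (Ph (k x)), kh; auto).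
  exists k; split; [|split; auto].
  split; [split; [split; [auto | exists h; auto] | auto]|].
  intros V SV.
  destruct (classic (exists v, V v)) as [[v Vv]|Hne].
  - destruct HS as [[_ [_ [_ Sd]]] _].
    destruct (Sd V SV) as [J [F [FS Fdec]]].
    destruct (proj1 (proj1 (proj2 (proj2 Fdec)) (k v)) (ex_intro _ v (conj Vv (eq_sym (Pk v)))))
      as [j Fj].
    assert (E : image h (F j) = V).
    { apply (same_sheet HS v); auto.
      - exists (k v); auto.
      - intro y. rewrite (@image_over_p _ _ p h (F j) Ph). apply (sheet_image Fdec). }
    rewrite <- E, <- image_comp.
    replace (fun x => k (h x)) with (fun x : X => x) by (apply functional_extensionality; auto).
    rewrite image_id; auto.
  - replace (image k V) with V; auto.
    apply set_ext; intro z; split; intro H; exfalso; apply Hne.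
    + exists z; auto.
    + destruct H as [a [Va _]]; exists a; auto.
Qed.

Lemma deck_group : homeo_group tX G.
Proof.
  split; [exact deck_id | split; [exact deck_comp | split; [exact deck_inv|]]].
  intros g [[H _] _]; exact H.
Qed.

Hypothesis X_connected : connected tX.
Local Notation pi := (orbit_proj G).
Local Notation tQ := (orbit_topology tX G).

Lemma deck_unique g h x : G g -> G h -> g x = h x -> g = h.
Proof.
  intros Gg Gh E.
  destruct (deck_inv Gh) as [k [Gk [hk kh]]].
  assert (Hid : (fun z => k (g z)) = fun z => z).
  { apply (lift_rigid (covering_slices_cover (proj1 HS))) with (x0 := x); auto.
    - destruct (deck_comp Gk Gg) as [[[C _] _] _]; exact C.
    - intro z; rewrite (deck_over_p Gk), (deck_over_p Gg); auto.
    - rewrite E, hk; auto. }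
  apply functional_extensionality; intro z.
  rewrite <- (kh (g z)). exact (f_equal h (equal_f Hid z)).
Qed.

Lemma deck_free : free_action G.
Proof. intros g x Gg Hx. exact (deck_unique x Gg deck_id Hx). Qed.

(* The orbit projection is injective on every member of S, since points of one
   orbit have the same image under p. *)
Lemma orbit_proj_inj_on_S U : S U -> forall a b, U a -> U b -> pi a = pi b -> a = b.
Proof.
  intros SU a b Ua Ub E.
  apply (orbit_proj_eq deck_group) in E. destruct E as [h [Gh <-]].
  apply (slice_inj (covering_slices (proj1 HS) U SU)); auto.
  rewrite (deck_over_p Gh); auto.
Qed.

Lemma translates_decomp U : S U ->
  sheet_decomp tX tQ pi U (fun g : {g | G g} => image (proj1_sig g) U).
Proof.
  intro SU. destruct HS as [[So [_ [Ss _]]] _].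
  split; [|split; [|split]].
  - intros [g Gg]; simpl. apply So, (deck_preserves_S Gg); exact SU.
  - intros [g Gg] [h Gh] x [u1 [U1 E1]] [u2 [U2 E2]]. apply sig_ext; simpl in *.
    assert (u1 = u2) as <-.
    { apply (slice_inj (Ss U SU)); auto.
      rewrite <- (deck_over_p Gg u1), <- (deck_over_p Gh u2), E1, E2; auto. }
    apply (deck_unique u1 Gg Gh); congruence.
  - intro x; split.
    + intros [u [Uu E]]. apply (orbit_proj_eq deck_group) in E. destruct E as [h [Gh <-]].
      exists (exist _ h Gh); exists u; auto.
    + intros [[g Gg] [u [Uu <-]]]. exists u; split; [exact Uu|].
      symmetry; apply (orbit_proj_invariant deck_group); exact Gg.
  - intros [g Gg]; simpl.
    rewrite <- (image_orbit_proj_invariant deck_group g U Gg).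
    apply (orbit_proj_homeo_on deck_group).
    + apply So, (deck_preserves_S Gg); exact SU.
    + apply orbit_proj_inj_on_S, (deck_preserves_S Gg); exact SU.
Qed.

Lemma deck_covering : covering_structure tX tQ pi S.
Proof.
  destruct HS as [[So [Sc _]] _].
  split; [exact So | split; [exact Sc | split]]; intros U SU.
  - split; [exact (So U SU)|].
    exists {g | G g}, (fun g => image (proj1_sig g) U).
    split; [exact (translates_decomp SU)|].
    exists (exist _ (fun y => y) deck_id); simpl. rewrite image_id. tauto.
  - exists {g | G g}, (fun g => image (proj1_sig g) U).
    split; [|exact (translates_decomp SU)].
    intros [g Gg]; apply (deck_preserves_S Gg); exact SU.
Qed.

(* The stars are slices of the action: if g moves a point of st(x) into st(x),
   injectivity of p on st(x) makes that point fixed, so g = id by freeness. *)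
Lemma deck_overlay_action : overlay_action tX G S.
Proof.
  split; [exact deck_free | split; [exact deck_covering|]].
  intro x. pose proof (proj2 HS x) as Slx. split; [exact (proj1 Slx)|].
  intros g Gg [y [Hy [z [Hz E]]]].
  apply (deck_free (x := z) Gg).
  apply (slice_inj Slx); [rewrite E; exact Hy | exact Hz | apply (deck_over_p Gg)].
Qed.
End DeckGroup.

Definition orbit_factor {X Y : Type} (G : (X -> X) -> Prop) (p : X -> Y)
  (xi : orbit_space G) : Y :=
  p (proj1_sig (constructive_indefinite_description _ (proj2_sig xi))).
Arguments orbit_factor {X Y} G p xi.

Section Factorization.
Variables (X Y : Type) (tX : topology X) (tY : topology Y) (p : X -> Y).
Variable S : (X -> Prop) -> Prop.
Hypothesis p_cont : continuous tX tY p.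
Hypothesis HS : overlay_structure tX tY p S.
Local Notation G := (deck_preserving tX p S).
Local Notation pi := (orbit_proj G).
Local Notation tQ := (orbit_topology tX G).
Local Notation q := (orbit_factor G p).

Lemma factor_proj x : q (pi x) = p x.
Proof.
  unfold orbit_factor.
  destruct (constructive_indefinite_description _ (proj2_sig (pi x))) as [x' Hx']; simpl in *.
  assert (E : pi x = pi x') by (apply sig_ext; exact Hx').
  apply (orbit_proj_eq (deck_group HS)) in E. destruct E as [h [Gh <-]].
  apply (deck_over_p Gh).
Qed.

Lemma factor_continuous : continuous tQ tY q.
Proof.
  intros V HV. change (open tX (fun x => V (q (pi x)))).
  replace (fun x => V (q (pi x))) with (fun x => V (p x)); [apply p_cont; exact HV|].
  apply set_ext; intro x; rewrite factor_proj; tauto.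
Qed.

Lemma factor_image A : image q (image pi A) = image p A.
Proof.
  apply set_ext; intro y; split.
  - intros [xi [[a [Aa <-]] <-]]. rewrite factor_proj. exists a; auto.
  - intros [a [Aa <-]]. exists (pi a); split; [exists a; auto | apply factor_proj].
Qed.

Lemma factor_homeo_on V B : homeo_onto tX tY p V B -> homeo_onto tQ tY q (image pi V) B.
Proof.
  intros [Hm [Hi [Hs [_ Hc]]]]. split; [|split; [|split; [|split]]].
  - intros xi [v [Vv <-]]. rewrite factor_proj. apply Hm; exact Vv.
  - intros x1 x2 [a [Va <-]] [b [Vb <-]]. rewrite !factor_proj. intro E.
    rewrite (Hi a b Va Vb E); auto.
  - intros y By. destruct (Hs y By) as [v [Vv <-]].
    exists (pi v); split; [exists v; auto | apply factor_proj].
  - intros Vy HVy. exists (fun xi => Vy (q xi)).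
    split; [apply factor_continuous; exact HVy | tauto].
  - intros W HW. destruct (Hc (fun x => W (pi x)) HW) as [Vy [HVy HV]].
    exists Vy; split; [exact HVy|].
    intros xi [a [Va <-]]. rewrite factor_proj. apply HV; exact Va.
Qed.

Definition invariant_sheets (A : X -> Prop) (F : (X -> Prop) -> Prop) : Prop :=
  (forall V, F V -> open tX V /\ homeo_onto tX tY p V (image p A)) /\
  (forall x, image p A (p x) -> exists V, F V /\ V x) /\
  (forall V h, F V -> G h -> F (image h V)) /\
  (forall V1 V2 z, F V1 -> F V2 -> V1 z -> V2 z -> V1 = V2).

Definition quotient_sheet (F : (X -> Prop) -> Prop) : Type :=
  {W : orbit_space G -> Prop | exists V, F V /\ W = image pi V}.

(* Invariant sheets over p(A) descend to sheets of q over q(pi(A)) = p(A);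
   G-invariance makes pi(V1), pi(V2) equal as soon as they meet. *)
Lemma descend_sheets A F : invariant_sheets A F ->
  sheet_decomp tQ tY q (image pi A) (fun W : quotient_sheet F => proj1_sig W).
Proof.
  intros [Fh [Fcov [Finv Fdisj]]].
  pose proof (deck_group HS) as HG.
  unfold sheet_decomp; rewrite factor_image. split; [|split; [|split]].
  - intros [W [V [FV ->]]]; simpl. apply (orbit_proj_open HG), (Fh V FV).
  - intros [W1 [V1 [FV1 ->]]] [W2 [V2 [FV2 ->]]] xi [a [Va <-]] [b [Vb E]].
    apply sig_ext; simpl.
    apply (orbit_proj_eq HG) in E. destruct E as [h [Gh <-]].
    assert (E2 : image h V2 = V1) by (apply (Fdisj _ _ (h b)); auto; exists b; auto).
    rewrite <- E2. apply (image_orbit_proj_invariant HG); exact Gh.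
  - intro xi. destruct (orbit_proj_surj xi) as [x ->]. rewrite factor_proj. split.
    + intro H. destruct (Fcov x H) as [V [FV Vx]].
      exists (exist _ (image pi V) (ex_intro _ V (conj FV eq_refl))); exists x; auto.
    + intros [[W [V [FV ->]]] [v [Vv E]]].
      apply (orbit_proj_eq HG) in E. destruct E as [h [Gh <-]].
      rewrite (deck_over_p Gh). apply (proj1 (proj2 (Fh V FV))); exact Vv.
  - intros [W [V [FV ->]]]; simpl. apply factor_homeo_on, (Fh V FV).
Qed.

Lemma descend_slice A F : invariant_sheets A F -> F A -> slice tQ tY q (image pi A).
Proof.
  intros HF FA. split.
  - apply (orbit_proj_open (deck_group HS)), (proj1 HF A FA).
  - exists (quotient_sheet F), (fun W => proj1_sig W). split; [exact (descend_sheets HF)|].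
    exists (exist _ (image pi A) (ex_intro _ A (conj FA eq_refl))); tauto.
Qed.

Definition S_sheets (U : X -> Prop) : (X -> Prop) -> Prop :=
  fun V => S V /\ image p V = image p U.

Lemma S_sheets_invariant U : S U -> invariant_sheets U (S_sheets U).
Proof.
  intro SU. pose proof HS as [[So [_ [Ss Sd]]] _].
  split; [|split; [|split]].
  - intros V [SV E]. split; [exact (So V SV)|].
    rewrite <- E. apply slice_homeo, Ss; exact SV.
  - intros x Hx. destruct (Sd U SU) as [J [F [FS Fdec]]].
    destruct (proj1 (proj1 (proj2 (proj2 Fdec)) x) Hx) as [j Fj].
    exists (F j); split; [|exact Fj].
    split; [exact (FS j) | apply set_ext; apply (sheet_image Fdec)].
  - intros V h [SV E] Gh. split; [apply (deck_preserves_S Gh); exact SV|].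
    rewrite <- E. apply image_over_p, (deck_over_p Gh).
  - intros V1 V2 z [SV1 E1] [SV2 E2] H1 H2.
    apply (same_sheet HS z); auto. rewrite E1, E2; tauto.
Qed.

(* p(st(x)) depends only on p(x): a member U of S through x' and z is matched by
   the sheet over p(U) through x, which contains a point over p(z). *)
Lemma star_image_sub x x' : p x' = p x ->
  forall y, image p (star S x') y -> image p (star S x) y.
Proof.
  intros E y [z [[U [SU [Ux' Uz]]] <-]].
  pose proof HS as [[_ [_ [_ Sd]]] _].
  destruct (Sd U SU) as [J [F [FS Fdec]]].
  destruct (proj1 (proj1 (proj2 (proj2 Fdec)) x) (ex_intro _ x' (conj Ux' E))) as [j Fjx].
  destruct (proj2 (sheet_image Fdec j (p z)) (ex_intro _ z (conj Uz eq_refl)))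
    as [w [Fjw Ew]].
  exists w; split; [exists (F j); auto | exact Ew].
Qed.

Lemma star_image x x' : p x' = p x -> image p (star S x') = image p (star S x).
Proof. intro E. apply set_ext; intro y; split; apply star_image_sub; auto. Qed.

Lemma star_translate h x : G h -> image h (star S x) = star S (h x).
Proof.
  intro Gh. apply set_ext; intro z; split.
  - intros [y [[U [SU [Ux Uy]]] <-]].
    exists (image h U); split; [apply (deck_preserves_S Gh); exact SU|].
    split; [exists x | exists y]; auto.
  - intros [U [SU [Uhx Uz]]].
    destruct (deck_inv HS Gh) as [k [Gk [hk kh]]].
    exists (k z); split; [|apply kh].
    exists (image k U); split; [apply (deck_preserves_S Gk); exact SU|].
    split; [exists (h x) | exists z]; auto.
Qed.

Lemma star_quotient x : star (image_family pi S) (pi x) = image pi (star S x).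
Proof.
  pose proof (deck_group HS) as HG.
  apply set_ext; intro zeta; split.
  - intros [W [[U [SU ->]] [[u [Uu E]] [u' [Uu' <-]]]]].
    apply (orbit_proj_eq HG) in E. destruct E as [h [Gh <-]].
    exists (h u'); split; [|apply (orbit_proj_invariant HG); exact Gh].
    exists (image h U); split; [apply (deck_preserves_S Gh); exact SU|].
    split; [exists u | exists u']; auto.
  - intros [y [[U [SU [Ux Uy]]] <-]].
    exists (image pi U); split; [exists U; auto|].
    split; [exists x | exists y]; auto.
Qed.

Definition star_sheets (x : X) : (X -> Prop) -> Prop :=
  fun V => exists x', p x' = p x /\ V = star S x'.

Lemma star_sheets_invariant x : invariant_sheets (star S x) (star_sheets x).
Proof.
  pose proof HS as [[_ [_ [_ Sd]]] Hst].
  split; [|split; [|split]].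
  - intros V [x' [E ->]]. split; [exact (proj1 (Hst x'))|].
    rewrite <- (star_image E). apply slice_homeo; exact (Hst x').
  - intros y [z [[U [SU [Ux Uz]]] Ez]].
    destruct (Sd U SU) as [J [F [FS Fdec]]].
    destruct (proj1 (proj1 (proj2 (proj2 Fdec)) y) (ex_intro _ z (conj Uz Ez))) as [j Fjy].
    destruct (proj2 (sheet_image Fdec j (p x)) (ex_intro _ x (conj Ux eq_refl)))
      as [x' [Fjx' Ex']].
    exists (star S x'); split; [exists x'; auto | exists (F j); auto].
  - intros V h [x' [E ->]] Gh. exists (h x'); split.
    + rewrite (deck_over_p Gh); exact E.
    + apply star_translate; exact Gh.
  - intros V1 V2 z [x1 [E1 ->]] [x2 [E2 ->]] [U1 [SU1 [U1x U1z]]] [U2 [SU2 [U2x U2z]]].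
    replace x2 with x1; [reflexivity|].
    apply (slice_inj (Hst z)); [exists U1; auto | exists U2; auto | congruence].
Qed.

(* q is an overlay with structure pi(S): the sheets of S over p(U), and the
   stars over the fibre of x, descend along pi. *)
Lemma factor_overlay : overlay_structure tQ tY q (image_family pi S).
Proof.
  pose proof HS as [[So [Sc _]] _].
  split; [split; [|split; [|split]]|].
  - intros W [U [SU ->]]. apply (orbit_proj_open (deck_group HS)), So; exact SU.
  - intro xi. destruct (orbit_proj_surj xi) as [x ->]. destruct (Sc x) as [U [SU Ux]].
    exists (image pi U); split; [exists U; auto | exists x; auto].
  - intros W [U [SU ->]].
    apply (descend_slice (S_sheets_invariant SU)); split; [exact SU | reflexivity].
  - intros W [U [SU ->]]. exists (quotient_sheet (S_sheets U)), (fun W => proj1_sig W).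
    split; [|exact (descend_sheets (S_sheets_invariant SU))].
    intros [W HW]; simpl. destruct HW as [V [[SV _] E]]. exists V; auto.
  - intro xi. destruct (orbit_proj_surj xi) as [x ->]. rewrite star_quotient.
    apply (descend_slice (star_sheets_invariant x)). exists x; auto.
Qed.
End Factorization.

Theorem proposition5p5 (X Y : Type) (tX : topology X) (tY : topology Y)
  (p : X -> Y) (S : (X -> Prop) -> Prop) :
  continuous tX tY p ->
  overlay_structure tX tY p S ->
  connected tX ->
  overlay_action tX (deck_preserving tX p S) S /\
  exists q : orbit_space (deck_preserving tX p S) -> Y,
    (forall x, p x = q (orbit_proj (deck_preserving tX p S) x)) /\
    continuous (orbit_topology tX (deck_preserving tX p S)) tY q /\
    overlay_structure (orbit_topology tX (deck_preserving tX p S)) tY q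
      (image_family (orbit_proj (deck_preserving tX p S)) S).
Proof.
  intros p_cont HS X_connected.
  split; [exact (deck_overlay_action HS X_connected)|].
  exists (orbit_factor (deck_preserving tX p S) p).
  split; [|split].
  - intro x; symmetry; apply (factor_proj HS).
  - exact (factor_continuous p_cont HS).
  - exact (factor_overlay p_cont HS).
Qed.
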